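(* Let $n\ge5$, $x\in\mathcal{H}_n$ and $p_0<p_1<\dots<p_{n-4}$. Then any two chain covers for $x$ are connected to each other in $\tilde{\mathbb{H}}_1(x,p)$, i.e. the corresponding vertices of the tropical curve $\tilde{\mathbb{H}}_1(x,p)$ can be joined by a sequence of edges of $\tilde{\mathbb{H}}_1(x,p)$.
   Context: $\mathcal{H}_n:=\{x\in\mathbb{Z}^n:\sum_i x_i=0\}\setminus\{0\}$. $\tilde{\mathbb{H}}_1(x,p)$ is the one-dimensional marked tropical Hurwitz cycle, $\tilde{\mathbb{H}}_1(x,p)=\prod_{i=0}^{n-4}(\Psi_i\cdot\mathrm{ev}_i^*(p_i))\cdot\mathcal{M}_{0,n-3}(\mathbb{R},x)$, where $\mathcal{M}_{0,m}(\mathbb{R},x)=\mathcal{M}_{0,n+m}\times\mathbb{R}$ is the space of tropical stable maps of rational $n$-marked curves with $m$ additional contracted leaves $l_0,\dots,l_{m-1}$ to $\mathbb{R}$ with slopes $x_i$ on leaf $i$, $\mathrm{ev}_i$ is evaluation at $l_i$, $\Psi_i$ is the Psi class of $l_i$ (curves where $l_i$ sits at a vertex of valence $\ge4$) times $\mathbb{R}$, and $\mathrm{ev}_i^*(p_i)$ is the pull-back of $t\mapsto\max\{t,p_i\}$. Orientation/weights: for an $n$-marked rational tropical curve, leaf $i$ has weight $|x_i|$ and points away from its vertex iff $x_i>0$; a bounded edge inducing the split $I\mid I^c$ has weight $|\sum_{i\in I}x_i|$ and points towards $I$ iff $\sum_{i\in I}x_i>0$. A vertex type cover is a combinatorial type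 of an $n$-marked rational curve with exactly one four-valent vertex and all other vertices trivalent, together with a bijective labeling of its $n-3$ vertices by $p_0,\dots,p_{n-4}$, such that every bounded edge has nonzero weight and is oriented from the vertex with the smaller label to the vertex with the larger label; these are exactly the vertices of $\tilde{\mathbb{H}}_1(x,p)$ (the $p_j$ determine all edge lengths). A chain cover is a vertex type cover in which the vertices carrying $p_i$ and $p_j$ are adjacent iff $|i-j|=1$. *)

From HB Require Import structures.
From mathcomp Require Import all_boot all_order all_algebra.
From Stdlib Require Import Relations.
Set Implicit Arguments. Unset Strict Implicit. Unset Printing Implicit Defensive.
Import Order.TTheory GRing.Theory Num.Theory.
Local Open Scope ring_scope.

Definition Hn (n : nat) (x : 'I_n -> int) : Prop :=
  \sum_(i < n) x i = 0 /\ exists i, x i != 0.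

(* A combinatorial type on internal vertex set V: a tree e : rel V (bounded edges)
   and a map l : 'I_n -> V telling at which vertex the leaf i is attached. *)

Definition cut (V : finType) (e : rel V) (v w : V) : rel V :=
  fun a b => e a b && ~~ (((a == v) && (b == w)) || ((a == w) && (b == v))).

Definition is_tree (V : finType) (e : rel V) : Prop :=
  (forall a b, e a b = e b a) /\ (forall a, ~~ e a a) /\
  (forall a b, connect e a b) /\
  #|[set pr : V * V | e pr.1 pr.2]| = (2 * (#|V| - 1))%N.

Definition valence (V : finType) (n : nat) (e : rel V) (l : 'I_n -> V) (v : V) : nat :=
  (#|[set w | e v w]| + #|[set i : 'I_n | l i == v]|)%N.

(* For a bounded edge {v,w}: the sum of x_i over the leaves on the w-side I
   of the split I | I^c induced by the edge.  Its absolute value is the weight,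
   and the edge points from v to w iff this sum is > 0. *)
Definition esum (V : finType) (n : nat) (e : rel V) (l : 'I_n -> V)
  (x : 'I_n -> int) (v w : V) : int :=
  \sum_(i < n | connect (cut e v w) w (l i)) x i.

(* Internal vertices are identified with their labels p_0..p_(n-4), i.e. 'I_(n-3). *)
Definition Cover (n : nat) := (rel 'I_(n - 3) * ('I_n -> 'I_(n - 3)))%type.

Definition vertex_type_cover (n : nat) (x : 'I_n -> int) (C : Cover n) : Prop :=
  let: (e, l) := C in
  is_tree e /\
  (exists v, valence e l v = 4%N /\ forall w, w != v -> valence e l w = 3%N) /\
  (forall v w, e v w -> esum e l x v w != 0 /\
                         (0 < esum e l x v w -> (val v < val w)%N)).

Definition chain_cover (n : nat) (x : 'I_n -> int) (C : Cover n) : Prop :=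
  vertex_type_cover x C /\
  forall v w : 'I_(n - 3), C.1 v w = (((val v).+1 == val w) || ((val w).+1 == val v)).

(* A cell: trivalent n-marked type whose internal vertices are the n-3 labelled
   vertices (Some j, sitting at p_j) plus one free vertex None (at position t). *)
Definition pos (R : realFieldType) (n : nat) (p : 'I_(n - 3) -> R) (t : R)
  (v : option 'I_(n - 3)) : R :=
  if v is Some j then p j else t.

Definition cell_ok (R : realFieldType) (n : nat) (x : 'I_n -> int)
  (p : 'I_(n - 3) -> R) (E : rel (option 'I_(n - 3)))
  (L : 'I_n -> option 'I_(n - 3)) : Prop :=
  is_tree E /\ (forall v, valence E L v = 3%N) /\
  (forall v w, E v w -> esum E L x v w != 0) /\
  exists t : R, forall v w, E v w -> 0 < esum E L x v w -> pos p t v < pos p t w.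

Definition contract (n : nat) (E : rel (option 'I_(n - 3)))
  (L : 'I_n -> option 'I_(n - 3)) (a : 'I_(n - 3)) : Cover n :=
  (fun v w => E (Some v) (Some w) || ((v == a) && E None (Some w) && (w != a))
                                  || ((w == a) && E None (Some v) && (v != a)),
   fun i => odflt a (L i)).

Definition same_cover (n : nat) (C D : Cover n) : Prop :=
  (forall v w, C.1 v w = D.1 v w) /\ (forall i, C.2 i = D.2 i).

Definition H1_edge (R : realFieldType) (n : nat) (x : 'I_n -> int)
  (p : 'I_(n - 3) -> R) (C D : Cover n) : Prop :=
  vertex_type_cover x C /\ vertex_type_cover x D /\
  exists E L (a b : 'I_(n - 3)),
    cell_ok x p E L /\ a != b /\ E None (Some a) /\ E None (Some b) /\
    same_cover (contract E L a) C /\ same_cover (contract E L b) D.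

Definition H1_connected (R : realFieldType) (n : nat) (x : 'I_n -> int)
  (p : 'I_(n - 3) -> R) (C D : Cover n) : Prop :=
  clos_refl_trans (Cover n) (fun C D => same_cover C D \/ H1_edge x p C D) C D.

From HB Require Import structures.
From mathcomp Require Import all_boot all_order all_algebra.
From mathcomp Require Import zify.
From Stdlib Require Import Relations FunctionalExtensionality.
Import Order.TTheory GRing.Theory Num.Theory.
Set Implicit Arguments. Unset Strict Implicit. Unset Printing Implicit Defensive.

(* The bounded edges of a chain cover form the path 0 - 1 - ... - (n-4), so the cover is
   fixed by the vertex l i carrying each leaf i.  Moving one leaf k from a vertex t to t + 1
   between two chain covers is realised by an edge of H~_1(x, p): its cell has an extra
   trivalent vertex carrying k alone, placed between p_t and p_(t+1), and contracting either
   of its bounded edges gives back the two covers.  It thus suffices to join any two admissible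
   leaf maps by such moves.  Order the leaves by (x_i, i).  Moving the largest leaf of the
   four-valent vertex one step right, or its smallest leaf one step left, keeps every edge
   pointing right and creates no inversion of this order; such moves remove any inversion,
   and then push the four-valent vertex to the last vertex.  An inversion-free leaf map is
   determined by its leaf counts, which fix how many leaves sit at vertices <= u. *)

#[local] Arguments rst_step {A R x y}.
#[local] Arguments rst_sym {A R x y}.
#[local] Arguments rst_trans {A R x y z}.
#[local] Arguments rt_step {A R x y}.
#[local] Arguments rt_trans {A R x y z}.

Lemma card_edge_set (V : finType) (e : rel V) :
  #|[set q : V * V | e q.1 q.2]| = \sum_v #|[set w | e v w]|.
Proof.
rewrite -sum1dep_card -(pair_big_dep xpredT e (fun _ _ => 1)) /=.
by apply: eq_bigr => v _; rewrite sum1dep_card.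
Qed.

Section PathGraph.
Variables (V : finType) (rank : V -> nat).
Hypothesis rank_inj : injective rank.
Hypothesis rank_lt : forall v, rank v < #|V|.

Definition path_rel : rel V := fun a b => ((rank a).+1 == rank b) || ((rank b).+1 == rank a).

Lemma rank_surj k : k < #|V| -> exists v, rank v = k.
Proof.
move=> hk; pose g v : 'I_#|V| := Ordinal (rank_lt v).
have g_inj : injective g by move=> a b /(congr1 val) /rank_inj.
have /imsetP[v _ /(congr1 val) /= ->] : Ordinal hk \in [set g v | v in V].
  have -> : [set g v | v in V] = setT.
    by apply/eqP; rewrite eqEcard subsetT /= cardsT card_ord card_imset.
  by rewrite inE.
by exists v.
Qed.

Lemma connect_rank_up (e : rel V) lo a b :
  (forall c d, rank d = (rank c).+1 -> lo <= rank c -> e c d) ->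
  lo <= rank a <= rank b -> connect e a b.
Proof.
move=> he /andP[hlo hab]; have [d hd] : exists d, rank b = rank a + d.
  by exists (rank b - rank a); lia.
elim: d b hd {hab} => [|d IH] b hb; first by rewrite addn0 in hb; rewrite (rank_inj hb) connect0.
have [c hc] : exists c, rank c = rank a + d by apply: rank_surj; have := rank_lt b; lia.
by apply: connect_trans (IH c hc) (connect1 (he _ _ _ _)); lia.
Qed.

Lemma path_rel_sym : ssrbool.symmetric path_rel.
Proof. by move=> a b; rewrite /path_rel orbC. Qed.

Lemma path_rel_irr a : ~~ path_rel a a.
Proof. by rewrite /path_rel; apply/negP; lia. Qed.

Lemma connect_path_rel a b : connect path_rel a b.
Proof.
have up c d : rank c <= rank d -> connect path_rel c d.
  move=> hcd; apply: (connect_rank_up (lo := 0)) => [c' d' h _|]; last by lia.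
  by rewrite /path_rel h eqxx.
case: (leqP (rank a) (rank b)) => [/up //|/ltnW /up].
by rewrite (sym_connect_sym path_rel_sym).
Qed.

Lemma connect_cut_path_rel_up v w u : rank w = (rank v).+1 ->
  connect (cut path_rel v w) w u = (rank w <= rank u).
Proof.
move=> hw; apply/idP/idP => [/connectP[q hq ->]|hu].
  suff stay a : rank w <= rank a -> path (cut path_rel v w) a q -> rank w <= rank (last a q).
    exact: stay (leqnn _) hq.
  elim: q a {hq} => [|c q IH] a //= ha /andP[hac hq]; apply: IH hq.
  move: hac; rewrite /cut /path_rel => /andP[hac]; apply: contraNleq => hc.
  have ea : rank a = rank w by case/orP: hac => /eqP; lia.
  have ec : rank c = rank v by case/orP: hac => /eqP; lia.
  by rewrite (rank_inj ea) (rank_inj ec) !eqxx orbT.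
apply: (connect_rank_up (lo := rank w)) => [c d hcd hc|]; last by rewrite leqnn.
rewrite /cut /path_rel hcd eqxx /=; apply/negP; case/orP=> /andP[/eqP ec /eqP ed].
  by move: hc; rewrite ec hw; lia.
by move: hcd; rewrite ec ed hw; lia.
Qed.

Lemma card_rank_eq k : #|[set w | rank w == k]| = (k < #|V|).
Proof.
case: ltnP => hk.
  have [v hv] := rank_surj hk.
  suff -> : [set w | rank w == k] = [set v] by rewrite cards1.
  by apply/setP=> w; rewrite !inE -hv (inj_eq rank_inj).
apply/eqP; rewrite cards_eq0; apply/eqP/setP=> w; rewrite !inE.
by apply/negbTE/eqP; have := rank_lt w; lia.
Qed.

Lemma card_path_rel_nbrs v :
  #|[set w | path_rel v w]| = (0 < rank v) + ((rank v).+1 < #|V|).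
Proof.
have -> : [set w | path_rel v w] =
          [set w | rank w == (rank v).+1] :|: [set w | rank w == (rank v).-1 & 0 < rank v].
  by apply/setP=> w; rewrite !inE /path_rel eq_sym; apply/orP/orP; case=> /eqP ?; lia.
rewrite cardsU card_rank_eq.
have -> : [set w | rank w == (rank v).+1] :&: [set w | rank w == (rank v).-1 & 0 < rank v] = set0.
  by apply/setP=> w; rewrite !inE; apply/negbTE/negP; lia.
rewrite cards0 subn0 addnC; congr (_ + _); case: (posnP (rank v)) => [->|hv].
  by apply/eqP; rewrite cards_eq0; apply/eqP/setP=> w; rewrite !inE andbF.
transitivity #|[set w | rank w == (rank v).-1]|.
  by apply: eq_card => w; rewrite !inE andbT.
by rewrite card_rank_eq; have := rank_lt v; lia.
Qed.

Lemma path_rel_tree : 0 < #|V| -> is_tree path_rel.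
Proof.
move=> hV; split; [exact: path_rel_sym | split; [exact: path_rel_irr | split]].
  exact: connect_path_rel.
rewrite card_edge_set; under eq_bigr => v _ do rewrite card_path_rel_nbrs.
rewrite big_split /=.
have sum_bool (P : pred V) : \sum_v (P v : nat) = #|[set v | P v]|.
  by rewrite -sum1dep_card [RHS]big_mkcond /=; apply: eq_bigr => v _; case: (P v).
rewrite !sum_bool.
have -> : [set v | 0 < rank v] = ~: [set v | rank v == 0].
  by apply/setP=> v; rewrite !inE lt0n.
have -> : [set v | (rank v).+1 < #|V|] = ~: [set v | rank v == #|V|.-1].
  by apply/setP=> v; rewrite !inE; have := rank_lt v; case: ltnP; case: eqP; lia.
have := cardsC [set v | rank v == 0]; have := cardsC [set v | rank v == #|V|.-1].
rewrite !card_rank_eq hV ltn_predL hV /=; lia.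
Qed.

End PathGraph.

(* The reversed rank a |-> #|V| - (rank a).+1 induces the same path. *)
Lemma connect_cut_path_rel_down (V : finType) (rank : V -> nat) v w u :
  injective rank -> (forall a, rank a < #|V|) -> rank v = (rank w).+1 ->
  connect (cut (path_rel rank) v w) w u = (rank u <= rank w).
Proof.
move=> rank_inj rank_lt hv; pose g a := #|V| - (rank a).+1.
have g_inj : injective g.
  move=> a b hab; apply: rank_inj; move: hab.
  by have := rank_lt a; have := rank_lt b; rewrite /g; lia.
have g_lt a : g a < #|V| by rewrite /g; have := rank_lt a; lia.
have eg : path_rel g =2 path_rel rank.
  move=> a b; rewrite /path_rel orbC; have := rank_lt a; have := rank_lt b.
  by rewrite /g => ha hb; congr orb; apply/eqP/eqP; lia.
have ecut : cut (path_rel g) v w =2 cut (path_rel rank) v w by move=> a b; rewrite /cut eg.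
rewrite -(eq_connect ecut) (connect_cut_path_rel_up g_inj g_lt); last first.
  by rewrite /g; have := rank_lt v; lia.
by rewrite /g; apply/idP/idP; have := rank_lt u; have := rank_lt w; lia.
Qed.

Local Open Scope ring_scope.

Section LeafMaps.
Variables (n N : nat) (x : 'I_n -> int).

Definition leaf_count (l : 'I_n -> 'I_N) (u : 'I_N) : nat := (\sum_i (l i == u : nat))%N.

(* The number of leaves making vertex t of the path 0 - 1 - ... - N.-1 trivalent. *)
Definition free_slots (t : 'I_N) : nat :=
  if (t == 0 :> nat) || (t == N.-1 :> nat) then 2 else 1.

Definition right_sum (l : 'I_n -> 'I_N) (t : nat) : int :=
  \sum_i (if (t < l i)%N then x i else 0).

Definition block_sum (l : 'I_n -> 'I_N) (t : 'I_N) : int :=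
  \sum_i (if l i == t then x i else 0).

(* l is admissible iff the chain with leaf map l is a vertex type cover: j is the four-valent
   vertex, and every bounded edge {t, t.+1}, whose edge sum is right_sum l t, points right. *)
Definition has_profile l (j : 'I_N) := forall t, leaf_count l t = (free_slots t + (t == j))%N.
Definition right_sums_pos l := forall t : nat, (t < N.-1)%N -> 0 < right_sum l t.
Definition admissible_at l j := has_profile l j /\ right_sums_pos l.
Definition admissible l := exists j, admissible_at l j.

Definition set_leaf (l : 'I_n -> 'I_N) k t i := if i == k then t else l i.

Definition leaf_move_at k (l l' : 'I_n -> 'I_N) :=
  [/\ forall i, i != k -> l' i = l i, l' k = (l k).+1 :> nat,
      admissible_at l (l k) & admissible_at l' (l' k)].
Definition leaf_move l l' := exists k, leaf_move_at k l l'.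
Definition leaf_connected := clos_refl_sym_trans _ leaf_move.

Lemma set_leaf_eq l k t : set_leaf l k t k = t.
Proof. by rewrite /set_leaf eqxx. Qed.

Lemma set_leaf_neq l k t i : i != k -> set_leaf l k t i = l i.
Proof. by rewrite /set_leaf => /negbTE ->. Qed.

Lemma leaf_count_change l l' k u : (forall i, i != k -> l' i = l i) ->
  (leaf_count l' u + (l k == u) = leaf_count l u + (l' k == u))%N.
Proof.
move=> h; rewrite /leaf_count (bigD1 k) //= [X in (_ = X + _)%N](bigD1 k) //=.
rewrite (eq_bigr (fun i => (l i == u : nat))); last by move=> i /h ->.
by rewrite addnAC [RHS]addnAC (addnC (l k == u : nat)).
Qed.

Lemma right_sum_change l l' k s : (forall i, i != k -> l' i = l i) ->
  right_sum l' s + (if (s < l k)%N then x k else 0) =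
  right_sum l s + (if (s < l' k)%N then x k else 0).
Proof.
move=> h; rewrite /right_sum (bigD1 k) //= [X in (_ = X + _)](bigD1 k) //=.
rewrite (eq_bigr (fun i => if (s < l i)%N then x i else 0)); last by move=> i /h ->.
by rewrite addrAC [RHS]addrAC (addrC (if _ then _ else _)).
Qed.

Lemma right_sum_pred l (j : 'I_N) : (0 < j)%N ->
  right_sum l j.-1 = right_sum l j + block_sum l j.
Proof.
move=> hj; rewrite /right_sum /block_sum -big_split /=; apply: eq_bigr => i _.
rewrite -(inj_eq (@ord_inj N)); case: eqP => ?; case: ltnP => ?; case: ltnP => ?.
all: by rewrite ?addr0 ?add0r //; lia.
Qed.

Lemma right_sum_last l : right_sum l N.-1 = 0.
Proof. by rewrite /right_sum big1 // => i _; have := ltn_ord (l i); case: ifP => //; lia. Qed.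

Lemma block_sum_le_max l (j : 'I_N) k : (forall i, l i = j -> x i <= x k) ->
  block_sum l j <= x k *+ leaf_count l j.
Proof.
move=> hmax; rewrite /block_sum /leaf_count -sumrMnr; apply: ler_sum => i _.
by case: eqP => [/hmax|_]; rewrite ?mulr1n ?mulr0n.
Qed.

Lemma block_sum_ge_min l (j : 'I_N) k : (forall i, l i = j -> x k <= x i) ->
  x k *+ leaf_count l j <= block_sum l j.
Proof.
move=> hmin; rewrite /block_sum /leaf_count -sumrMnr; apply: ler_sum => i _.
by case: eqP => [/hmin|_]; rewrite ?mulr1n ?mulr0n.
Qed.

Lemma has_profile_set_leaf l (j j' : 'I_N) k :
  has_profile l j -> l k = j -> j' != j -> has_profile (set_leaf l k j') j'.
Proof.
move=> hp hk hne t; have := leaf_count_change t (set_leaf_neq l (k := k) j').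
by rewrite set_leaf_eq hk hp (eq_sym j t) (eq_sym j' t); case: (t == j); case: (t == j'); lia.
Qed.

Lemma right_sums_pos_move_down l (j j' : 'I_N) k :
  has_profile l j -> right_sums_pos l -> j = j'.+1 :> nat -> l k = j ->
  (forall i, l i = j -> x k <= x i) -> right_sums_pos (set_leaf l k j').
Proof.
move=> hp hs hj hk hmin s hsN.
have := right_sum_change s (set_leaf_neq l (k := k) j'); rewrite set_leaf_eq hk hj.
case: (ltngtP s j') => hsj.
- have -> : (s < j'.+1)%N by lia.
  by move=> /addIr ->; apply: hs.
- have -> : (s < j'.+1)%N = false by apply/negbTE; lia.
  by move=> /addIr ->; apply: hs.
rewrite hsj ltnSn addr0 => /(canRL (addrK _)) ->.
have jpos : (0 < j)%N by rewrite hj.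
have hpred : right_sum l j' = right_sum l j + block_sum l j.
  by rewrite -(right_sum_pred l jpos) hj.
have hpos := hs _ hsN; rewrite hsj hpred in hpos *.
have hB := block_sum_ge_min hmin; rewrite hp eqxx /free_slots (gtn_eqF jpos) /= in hB.
case: (ltngtP j N.-1) => hjN.
- by rewrite (ltn_eqF hjN) /= in hB; have := hs _ hjN; lia.
- by have := ltn_ord j; lia.
by rewrite hjN eqxx /= in hB; rewrite hjN right_sum_last in hpos *; lia.
Qed.

Definition leaf_lt (a b : 'I_n) := (x a < x b) || ((x a == x b) && (a < b)%N).

Lemma leaf_lt_irr a : ~~ leaf_lt a a.
Proof. by rewrite /leaf_lt; apply/negP; lia. Qed.

Lemma leaf_lt_trans a b c : leaf_lt a b -> leaf_lt b c -> leaf_lt a c.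
Proof. by rewrite /leaf_lt; lia. Qed.

Lemma leaf_lt_asym a b : leaf_lt a b -> ~~ leaf_lt b a.
Proof. by rewrite /leaf_lt => h; apply/negP; lia. Qed.

Lemma leaf_lt_total a b : a != b -> leaf_lt a b || leaf_lt b a.
Proof. by rewrite -(inj_eq (@ord_inj n)) /leaf_lt; lia. Qed.

Lemma leaf_lt_le a b : leaf_lt a b -> x a <= x b.
Proof. by rewrite /leaf_lt; lia. Qed.

Definition leaf_rank a : nat := #|[set b | leaf_lt b a]|.

Lemma leaf_rank_lt a b : leaf_lt a b -> (leaf_rank a < leaf_rank b)%N.
Proof.
move=> hab; apply: proper_card; apply/properP; split.
  by apply/subsetP=> c; rewrite !inE => /leaf_lt_trans; apply.
by exists a; rewrite !inE ?hab // (negbTE (leaf_lt_irr a)).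
Qed.

Lemma exists_leaf_max (A : {set 'I_n}) k0 : k0 \in A ->
  exists2 k, k \in A & forall i, i \in A -> i != k -> leaf_lt i k.
Proof.
move=> hk0; case: (@arg_maxnP _ k0 (mem A) leaf_rank hk0) => k hkA hmax.
exists k => // i hi hne; case/orP: (leaf_lt_total hne) => // h.
by have := hmax i hi; have := leaf_rank_lt h; lia.
Qed.

Lemma exists_leaf_min (A : {set 'I_n}) k0 : k0 \in A ->
  exists2 k, k \in A & forall i, i \in A -> i != k -> leaf_lt k i.
Proof.
move=> hk0; case: (@arg_minnP _ k0 (mem A) leaf_rank hk0) => k hkA hmin.
exists k => // i hi; rewrite eq_sym => hne; case/orP: (leaf_lt_total hne) => // h.
by have := hmin i hi; have := leaf_rank_lt h; lia.
Qed.

Lemma has_profile_surj l j t : has_profile l j -> exists c, l c = t.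
Proof.
move=> hp; case: (pickP (fun i => l i == t)) => [c /eqP|h]; first by exists c.
by move: (hp t); rewrite /leaf_count big1 => [|i _]; rewrite ?h // /free_slots; case: ifP.
Qed.

Lemma exists_block_max l j t : has_profile l j ->
  exists2 k, l k = t & forall i, l i = t -> i != k -> leaf_lt i k.
Proof.
move=> /(has_profile_surj t)[c hc].
have [|k] := @exists_leaf_max [set i | l i == t] c; first by rewrite inE hc.
by rewrite inE => /eqP hk hmax; exists k => // i hi; apply: hmax; rewrite inE hi.
Qed.

Lemma exists_block_min l j t : has_profile l j ->
  exists2 k, l k = t & forall i, l i = t -> i != k -> leaf_lt k i.
Proof.
move=> /(has_profile_surj t)[c hc].
have [|k] := @exists_leaf_min [set i | l i == t] c; first by rewrite inE hc.
by rewrite inE => /eqP hk hmin; exists k => // i hi; apply: hmin; rewrite inE hi.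
Qed.

Definition inversions l := [set q : 'I_n * 'I_n | leaf_lt q.1 q.2 && (l q.2 < l q.1)%N].
Definition inversion_count l := #|inversions l|.

Lemma inversions_move_up (l : 'I_n -> 'I_N) k (t : 'I_N) : t = (l k).+1 :> nat ->
  (forall i, l i = l k -> i != k -> leaf_lt i k) ->
  inversions (set_leaf l k t) \subset inversions l.
Proof.
move=> ht hmax; apply/subsetP=> -[a b]; rewrite !inE /=.
case: (eqVneq a k) => [->|hak]; case: (eqVneq b k) => [->|hbk] /andP[hab].
- by rewrite (negbTE (leaf_lt_irr k)) in hab.
- rewrite set_leaf_eq set_leaf_neq // ht ltnS leq_eqVlt => /orP[/eqP hb|->]; last by rewrite hab.
  by move/leaf_lt_asym: (hmax b (val_inj hb) hbk); rewrite hab.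
- by rewrite set_leaf_eq set_leaf_neq // ht hab => /ltnW.
- by rewrite !set_leaf_neq // hab.
Qed.

Lemma inversions_move_down (l : 'I_n -> 'I_N) k (t : 'I_N) : l k = t.+1 :> nat ->
  (forall i, l i = l k -> i != k -> leaf_lt k i) ->
  inversions (set_leaf l k t) \subset inversions l.
Proof.
move=> ht hmin; apply/subsetP=> -[a b]; rewrite !inE /=.
case: (eqVneq a k) => [->|hak]; case: (eqVneq b k) => [->|hbk] /andP[hab].
- by rewrite (negbTE (leaf_lt_irr k)) in hab.
- by rewrite set_leaf_eq set_leaf_neq // ht hab => /leq_trans; apply.
- rewrite set_leaf_eq set_leaf_neq // hab /= => hta.
  rewrite ltn_neqAle ht hta andbT; apply/negP => /eqP ha.
  by move/leaf_lt_asym: (hmin a (val_inj (etrans (esym ha) (esym ht))) hak); rewrite hab.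
- by rewrite !set_leaf_neq // hab.
Qed.

Lemma exists_adjacent_inversion l j a b : has_profile l j -> leaf_lt a b -> (l b < l a)%N ->
  exists a' b', l a' = (l b').+1 :> nat /\ leaf_lt a' b'.
Proof.
move=> hp hab hlt; have [d] := ubnP (l a - l b)%N; elim: d => // d IH in a b hab hlt *.
move=> hd; case: (eqVneq (l a : nat) (l b).+1) => [e|ne]; first by exists a, b.
have hc : ((l b).+1 < N)%N by have := ltn_ord (l a); lia.
have [c hc'] := has_profile_surj (Ordinal hc) hp.
have hcb : c != b by apply/eqP => e; move: hc'; rewrite e => /(congr1 (@nat_of_ord N)) /=; lia.
case/orP: (leaf_lt_total hcb) => h; first by exists c, b; rewrite hc'.
by apply: (IH a c (leaf_lt_trans hab h)); rewrite hc' /=; lia.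
Qed.

Lemma inversion_free_monotone l a b : inversion_count l = 0%N -> leaf_lt a b -> (l a <= l b)%N.
Proof.
move/eqP; rewrite cards_eq0 => /eqP hE hab.
have : (a, b) \notin inversions l by rewrite hE inE.
by rewrite inE /= hab /= -leqNgt.
Qed.

Lemma card_leaves_le (l : 'I_n -> 'I_N) u :
  #|[set b | (l b <= u)%N]| = (\sum_(t : 'I_N | (t <= u)%N) leaf_count l t)%N.
Proof.
rewrite /leaf_count exchange_big /= -sum1_card [LHS]big_mkcond /=.
apply: eq_bigr => b _; rewrite inE; case: (leqP (l b) u) => h.
  by rewrite (bigD1 (l b)) //= eqxx big1 // => t /andP[_ ht]; rewrite eq_sym (negbTE ht).
by rewrite big1 // => t ht; case: eqP => // e; rewrite e in h; lia.
Qed.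

(* The profile fixes how many leaves lie at vertices <= u, and without inversions these are
   the smallest leaves for the leaf order. *)
Lemma inversion_free_le l1 l2 j : has_profile l1 j -> has_profile l2 j ->
  inversion_count l1 = 0%N -> inversion_count l2 = 0%N -> forall a, (l2 a <= l1 a)%N.
Proof.
move=> hp1 hp2 hi1 hi2 a; rewrite leqNgt; apply/negP => hlt.
have s1 : a |: [set b | leaf_lt b a] \subset [set b | (l1 b <= l1 a)%N].
  by apply/subsetP=> b; rewrite !inE => /orP[/eqP -> // | /(inversion_free_monotone hi1)].
have s2 : [set b | (l2 b <= l1 a)%N] \subset [set b | leaf_lt b a].
  apply/subsetP=> b; rewrite !inE => h.
  have hne : b != a by apply/eqP => e; move: h; rewrite e; lia.
  case/orP: (leaf_lt_total hne) => // /(inversion_free_monotone hi2); lia.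
have ecount : (\sum_(t : 'I_N | (t <= l1 a)%N) leaf_count l1 t =
                \sum_(t : 'I_N | (t <= l1 a)%N) leaf_count l2 t)%N.
  by apply: eq_bigr => t _; rewrite hp1 hp2.
have := subset_leq_card s1; have := subset_leq_card s2.
by rewrite cardsU1 inE (negbTE (leaf_lt_irr a)) !card_leaves_le ecount; lia.
Qed.

Hypothesis x_sum0 : \sum_i x i = 0.

Lemma right_sum0 l (j : 'I_N) : j = 0 :> nat -> right_sum l 0 = - block_sum l j.
Proof.
move=> hj; suff : right_sum l 0 + block_sum l j = 0 by move/eqP; rewrite addr_eq0 => /eqP.
rewrite /right_sum /block_sum -big_split -[RHS]x_sum0; apply: eq_bigr => i _ /=.
rewrite -(inj_eq (@ord_inj N)) hj; case: eqP => ?; case: ltnP => ?.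
all: by rewrite ?addr0 ?add0r //; lia.
Qed.

(* Moving the largest leaf k at the four-valent vertex j one step right only changes the
   right sum at j, which grows by x k; the vertex j carries at most 3 leaves, all <= x k. *)
Lemma right_sums_pos_move_up l (j j' : 'I_N) k :
  has_profile l j -> right_sums_pos l -> j' = j.+1 :> nat -> l k = j ->
  (forall i, l i = j -> x i <= x k) -> right_sums_pos (set_leaf l k j').
Proof.
move=> hp hs hj' hk hmax s hsN.
have := right_sum_change s (set_leaf_neq l (k := k) j'); rewrite set_leaf_eq hk hj'.
case: (ltngtP s j) => hsj.
- have -> : (s < j.+1)%N by lia.
  by move=> /addIr ->; apply: hs.
- have -> : (s < j.+1)%N = false by apply/negbTE; lia.
  by move=> /addIr ->; apply: hs.
rewrite hsj ltnSn addr0 => ->.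
have hjN : (j < N.-1)%N by have := ltn_ord j'; lia.
have hB := block_sum_le_max hmax; rewrite hp eqxx /free_slots (ltn_eqF hjN) orbF in hB.
have hpos := hs _ hjN.
case: (posnP j) => [j0|jpos] in hB *.
  by rewrite j0 (right_sum0 l j0) in hpos *; rewrite /= in hB; lia.
have := hs j.-1 (leq_ltn_trans (leq_pred _) hjN); rewrite right_sum_pred //=.
by rewrite /= in hB; lia.
Qed.

Lemma move_extra_up l (j j' : 'I_N) : j' = j.+1 :> nat -> admissible_at l j ->
  exists2 k, l k = j /\ (forall i, l i = j -> i != k -> leaf_lt i k) &
    [/\ leaf_move_at k l (set_leaf l k j'), admissible_at (set_leaf l k j') j'
      & inversions (set_leaf l k j') \subset inversions l].
Proof.
move=> hj' [hp hs]; have [k hk hmax] := exists_block_max j hp.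
have hmx i : l i = j -> x i <= x k.
  by move=> hi; case: (eqVneq i k) => [->//|ne]; exact/leaf_lt_le/hmax.
have hl' : admissible_at (set_leaf l k j') j'.
  split; last exact: right_sums_pos_move_up hj' hk hmx.
  by apply: (has_profile_set_leaf hp hk); apply/eqP => hjj; move: hj'; rewrite hjj; lia.
exists k => //; split => //.
  by split; rewrite ?set_leaf_eq ?hk // => i; apply: set_leaf_neq.
by apply: inversions_move_up; rewrite ?hk // => i; rewrite hk; apply: hmax.
Qed.

Lemma move_extra_down l (j j' : 'I_N) : j = j'.+1 :> nat -> admissible_at l j ->
  exists2 k, l k = j /\ (forall i, l i = j -> i != k -> leaf_lt k i) &
    [/\ leaf_move_at k (set_leaf l k j') l, admissible_at (set_leaf l k j') j'
      & inversions (set_leaf l k j') \subset inversions l].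
Proof.
move=> hj [hp hs]; have [k hk hmin] := exists_block_min j hp.
have hmn i : l i = j -> x k <= x i.
  by move=> hi; case: (eqVneq i k) => [->//|ne]; exact/leaf_lt_le/hmin.
have hl' : admissible_at (set_leaf l k j') j'.
  split; last exact: right_sums_pos_move_down hj hk hmn.
  by apply: (has_profile_set_leaf hp hk); apply/eqP => hjj; move: hj; rewrite hjj; lia.
exists k => //; split => //.
  by split; rewrite ?set_leaf_eq ?hk // => i /negbTE hi; rewrite /set_leaf hi.
by apply: inversions_move_down; rewrite ?hk // => i; rewrite hk; apply: hmin.
Qed.

Definition inversion_reducible l := exists l',
  [/\ admissible l', leaf_connected l l' & (inversion_count l' < inversion_count l)%N].

Lemma inversion_reducible_at_lower l a b :
  admissible_at l (l b) -> l a = (l b).+1 :> nat -> leaf_lt a b -> inversion_reducible l.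
Proof.
move=> hl hab hlt; have hj : ((l b).+1 < N)%N by rewrite -hab.
have [k [hk hmax] [hmove hl' hsub]] := move_extra_up (j' := Ordinal hj) (erefl _) hl.
exists (set_leaf l k (Ordinal hj)); split; first by exists (Ordinal hj).
  by apply: rst_step; exists k.
have hak : a != k by apply/eqP => e; move: hab; rewrite e hk; lia.
apply: proper_card; apply/properP; split => //; exists (a, k); rewrite !inE /=.
  rewrite hk hab ltnSn andbT; case: (eqVneq b k) => [<- //|hbk].
  exact: leaf_lt_trans hlt (hmax b erefl hbk).
by rewrite set_leaf_eq set_leaf_neq //= hab ltnn andbF.
Qed.

Lemma inversion_reducible_at_upper l a b :
  admissible_at l (l a) -> l a = (l b).+1 :> nat -> leaf_lt a b -> inversion_reducible l.
Proof.
move=> hl hab hlt.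
have [k [hk hmin] [hmove hl' hsub]] := move_extra_down (j' := l b) hab hl.
exists (set_leaf l k (l b)); split; [by exists (l b) | by apply/rst_sym/rst_step; exists k |].
have hbk : b != k by apply/eqP => e; move: hab; rewrite e hk; lia.
apply: proper_card; apply/properP; split => //; exists (k, b); rewrite !inE /=.
  rewrite hk hab ltnSn andbT; case: (eqVneq a k) => [<- //|hak].
  exact: leaf_lt_trans (hmin a erefl hak) hlt.
by rewrite set_leaf_eq set_leaf_neq //= ltnn andbF.
Qed.

Lemma inversion_reducible_move l l' : leaf_move l l' \/ leaf_move l' l ->
  inversions l' \subset inversions l -> inversion_reducible l' -> inversion_reducible l.
Proof.
move=> hmove hsub [l'' [hv hc hi]]; exists l''; split => //.
  by apply: rst_trans hc; case: hmove => h; [apply: rst_step | apply/rst_sym/rst_step].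
exact: leq_trans hi (subset_leq_card hsub).
Qed.

(* Push the four-valent vertex towards the adjacent inversion (a, b); the moves create no
   inversion, and the last one, between the vertices of b and a, removes one. *)
Lemma inversion_reducible_adjacent l j a b :
  admissible_at l j -> l a = (l b).+1 :> nat -> leaf_lt a b -> inversion_reducible l.
Proof.
move=> hl hab hlt; have [d] := ubnP ((l b - j) + (j - l a))%N.
elim: d => // d IH in l j hl hab hlt *.
case: (ltngtP j (l b)) => hjb hd.
- have hj : (j.+1 < N)%N by have := ltn_ord (l b); lia.
  have [k [hk _] [hmove hl' hsub]] := move_extra_up (j' := Ordinal hj) (erefl _) hl.
  have hak : a != k by apply/eqP => e; move: hab; rewrite e hk; lia.
  have hbk : b != k by apply/eqP => e; move: hjb; rewrite e hk; lia.
  apply: inversion_reducible_move hsub _; first by left; exists k.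
  by apply: (IH _ _ hl'); rewrite ?set_leaf_neq //=; lia.
- case: (ltngtP j (l a)) => hja; first by lia.
    have hj' : (j.-1 < N)%N by have := ltn_ord j; lia.
    have hjj' : j = (Ordinal hj').+1 :> nat by rewrite /=; lia.
    have [k [hk _] [hmove hl' hsub]] := move_extra_down hjj' hl.
    have hak : a != k by apply/eqP => e; move: hja; rewrite e hk; lia.
    have hbk : b != k by apply/eqP => e; move: hjb; rewrite e hk; lia.
    apply: inversion_reducible_move hsub _; first by right; exists k.
    by apply: (IH _ _ hl'); rewrite ?set_leaf_neq //=; lia.
  by rewrite (val_inj hja) in hl; exact: inversion_reducible_at_upper hl hab hlt.
by rewrite (val_inj hjb) in hl; exact: inversion_reducible_at_lower hl hab hlt.
Qed.

Lemma connect_inversion_free l : admissible l ->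
  exists2 l0, admissible l0 /\ inversion_count l0 = 0%N & leaf_connected l l0.
Proof.
have [m] := ubnP (inversion_count l); elim: m => // m IH in l *.
move=> hm [j hl]; have [z|] := posnP (inversion_count l).
  by exists l; [split => //; exists j | apply: rst_refl].
rewrite card_gt0 => /set0Pn[[a b]]; rewrite inE /= => /andP[hab hlt].
have [a' [b' [h1 h2]]] := exists_adjacent_inversion hl.1 hab hlt.
have [l' [hv hc hi]] := inversion_reducible_adjacent hl h1 h2.
have [l0 h0 hc0] := IH l' (leq_trans hi hm) hv.
by exists l0 => //; apply: rst_trans hc hc0.
Qed.

Lemma connect_extra_last l j : admissible_at l j -> inversion_count l = 0%N ->
  exists l1 j1, [/\ admissible_at l1 j1, j1 = N.-1 :> nat, inversion_count l1 = 0%N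
                  & leaf_connected l l1].
Proof.
move=> hl hi0; have [d] := ubnP (N.-1 - j)%N; elim: d => // d IH in l j hl hi0 *.
case: (ltnP j.+1 N) => hj hd; last first.
  by exists l, j; split => //; [have := ltn_ord j; lia | apply: rst_refl].
have [k _ [hmove hl' hsub]] := move_extra_up (j' := Ordinal hj) (erefl _) hl.
have hi' : inversion_count (set_leaf l k (Ordinal hj)) = 0%N.
  by apply/eqP; rewrite -leqn0 -hi0 subset_leq_card.
have [|l1 [j1 [h1 h2 h3 h4]]] := IH _ _ hl' hi'; first by rewrite /=; lia.
by exists l1, j1; split => //; apply: rst_trans h4; apply: rst_step; exists k.
Qed.

Lemma admissible_connected l1 l2 : admissible l1 -> admissible l2 -> leaf_connected l1 l2.
Proof.
move=> /connect_inversion_free[m1 [[j1 hm1] hi1] c1].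
move=> /connect_inversion_free[m2 [[j2 hm2] hi2] c2].
have [r1 [k1 [[hp1 _] hk1 z1 d1]]] := connect_extra_last hm1 hi1.
have [r2 [k2 [[hp2 _] hk2 z2 d2]]] := connect_extra_last hm2 hi2.
have ek : k1 = k2 by apply: val_inj; rewrite /= hk1 hk2.
rewrite -ek in hp2.
have er : r1 = r2.
  apply: functional_extensionality => a; apply: val_inj; apply/eqP; rewrite eqn_leq.
  by rewrite (inversion_free_le hp1 hp2 z1 z2) (inversion_free_le hp2 hp1 z2 z1).
rewrite er in d1.
by apply: rst_trans (rst_trans c1 d1) (rst_sym (rst_trans c2 d2)).
Qed.

End LeafMaps.

Lemma free_slots_valence N (t : 'I_N) : (1 < N)%N ->
  ((0 < t) + (t.+1 < N) + free_slots t = 3)%N.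
Proof.
rewrite /free_slots => hN; have := ltn_ord t.
by case: (posnP (nat_of_ord t)) => [->|h0] /=; [lia | case: eqP; lia].
Qed.

Section PathCovers.
Variables (V : finType) (rank : V -> nat).
Hypothesis rank_inj : injective rank.
Hypothesis rank_lt : forall v, (rank v < #|V|)%N.
Variables (n : nat) (l : 'I_n -> V) (x : 'I_n -> int).

Lemma esum_path_up v w : rank w = (rank v).+1 ->
  esum (path_rel rank) l x v w = \sum_i (if (rank w <= rank (l i))%N then x i else 0).
Proof.
move=> h; rewrite /esum big_mkcond /=; apply: eq_bigr => i _.
by rewrite (connect_cut_path_rel_up rank_inj rank_lt _ h).
Qed.

Lemma valence_path v : valence (path_rel rank) l v =
  ((0 < rank v) + ((rank v).+1 < #|V|) + \sum_i (l i == v : nat))%N.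
Proof.
rewrite /valence card_path_rel_nbrs // -sum1dep_card big_mkcond /=.
by congr (_ + _)%N; apply: eq_bigr => i _; case: eqP.
Qed.

Hypothesis x_sum0 : \sum_i x i = 0.

Lemma esum_path_down v w : rank v = (rank w).+1 ->
  esum (path_rel rank) l x v w = - \sum_i (if (rank w < rank (l i))%N then x i else 0).
Proof.
move=> h; rewrite /esum big_mkcond /=.
under eq_bigr => i _ do rewrite (connect_cut_path_rel_down _ rank_inj rank_lt h).
apply/eqP; rewrite -addr_eq0 -big_split -[X in _ == X]x_sum0 /=; apply/eqP; apply: eq_bigr => i _.
by case: leqP; rewrite ?addr0 ?add0r.
Qed.

End PathCovers.

Definition chain_rel (m : nat) : rel 'I_m := path_rel (@nat_of_ord m).
Arguments chain_rel : clear implicits.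

Lemma chain_rel_tree m : (0 < m)%N -> is_tree (chain_rel m).
Proof. by move=> hm; apply: path_rel_tree; rewrite ?card_ord //; exact: val_inj. Qed.

Lemma ord_lt_card m (v : 'I_m) : (v < #|'I_m|)%N.
Proof. by rewrite card_ord. Qed.

Lemma esum_eq_rel (V : finType) (e e' : rel V) n (l : 'I_n -> V) x v w :
  e =2 e' -> esum e l x v w = esum e' l x v w.
Proof. by move=> h; apply: eq_bigl => i; apply: eq_connect => a b; rewrite /cut h. Qed.

Lemma valence_eq_rel (V : finType) (e e' : rel V) n (l : 'I_n -> V) v :
  e =2 e' -> valence e l v = valence e' l v.
Proof. by move=> h; rewrite /valence; congr (_ + _)%N; apply: eq_card => w; rewrite !inE h. Qed.

Section ChainCovers.
Variables (n : nat) (x : 'I_n -> int).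

Local Notation N := (n - 3)%N.

Lemma chain_valence (l : 'I_n -> 'I_N) v :
  valence (chain_rel N) l v = ((0 < v) + (v.+1 < N) + leaf_count l v)%N.
Proof. by rewrite (valence_path (@ord_inj _) (@ord_lt_card _)) card_ord. Qed.

Lemma esum_chain_up (l : 'I_n -> 'I_N) (v w : 'I_N) : w = v.+1 :> nat ->
  esum (chain_rel N) l x v w = right_sum x l v.
Proof.
move=> h; rewrite (esum_path_up (@ord_inj _) (@ord_lt_card _) l x h).
by apply: eq_bigr => i _; rewrite h.
Qed.

Hypothesis x_sum0 : \sum_i x i = 0.

Lemma esum_chain_down (l : 'I_n -> 'I_N) (v w : 'I_N) : v = w.+1 :> nat ->
  esum (chain_rel N) l x v w = - right_sum x l w.
Proof. by move=> h; rewrite (esum_path_down (@ord_inj _) (@ord_lt_card _) _ x_sum0 h). Qed.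

Hypothesis n_ge5 : (5 <= n)%N.

Let hN : (1 < N)%N.
Proof. by rewrite ltn_subRL. Qed.

Lemma chain_cover_admissible C : chain_cover x C -> admissible x C.2.
Proof.
case: C => e l [[_ [[v [hv4 hv3]] hes]] /= he].
have eE : e =2 chain_rel N by move=> a b; rewrite he.
exists v; split=> [t|t ht].
  have := free_slots_valence t hN; case: (eqVneq t v) => [->|htv] /=.
    by move: hv4; rewrite (valence_eq_rel _ _ eE) chain_valence; lia.
  by move: (hv3 t htv); rewrite (valence_eq_rel _ _ eE) chain_valence; lia.
have ht1 : (t.+1 < N)%N by lia.
have ht0 : (t < N)%N by lia.
have := hes (Ordinal ht1) (Ordinal ht0); rewrite he /= eqxx orbT => /(_ isT)[].
rewrite (esum_eq_rel _ _ _ _ eE) (@esum_chain_down l (Ordinal ht1) (Ordinal ht0)) //=.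
by move=> hne hup; move: hne hup => /=; lia.
Qed.

Lemma admissible_vertex_type_cover l : admissible x l -> vertex_type_cover x (chain_rel N, l).
Proof.
case=> j [hp hs]; split; first by apply: chain_rel_tree; lia.
split.
  exists j; split => [|w hw]; rewrite chain_valence hp.
    by have := free_slots_valence j hN; rewrite eqxx; lia.
  by have := free_slots_valence w hN; rewrite (negbTE hw); lia.
move=> v w; rewrite /chain_rel /path_rel => /orP[/eqP h|/eqP h].
  have hpos : 0 < right_sum x l v by apply: hs; have := ltn_ord w; lia.
  rewrite esum_chain_up //; split => [|_]; first by lia.
  by change (nat_of_ord v < nat_of_ord w)%N; lia.
have hpos : 0 < right_sum x l w by apply: hs; have := ltn_ord v; lia.
by rewrite esum_chain_down //; split; lia.
Qed.

End ChainCovers.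

Section Cell.
Variables (n : nat) (x : 'I_n -> int).

Local Notation N := (n - 3)%N.

Variables (l l' : 'I_n -> 'I_N) (k : 'I_n).
Hypothesis l'_eq : forall i, i != k -> l' i = l i.
Hypothesis l'_k : l' k = (l k).+1 :> nat.

(* The cell is a path again: the free vertex None carries the leaf k alone and sits
   between the vertices l k and l' k. *)
Definition cell_rank (v : option 'I_N) : nat := if v is Some i then (i + (l k < i))%N else (l k).+1.
Definition cell_leaf i : option 'I_N := if i == k then None else Some (l i).

Lemma lk_succ_lt : ((l k).+1 < N)%N.
Proof. by rewrite -l'_k. Qed.

Let hN : (1 < N)%N.
Proof. by have := lk_succ_lt; lia. Qed.

Lemma cell_rank_inj : injective cell_rank.
Proof.
move=> [a|] [b|] //=; try by case: ltnP; lia.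
by move=> h; congr Some; apply: ord_inj; move: h; case: ltnP; case: ltnP; lia.
Qed.

Lemma cell_rank_lt v : (cell_rank v < #|{: option 'I_N}|)%N.
Proof.
rewrite card_option card_ord; case: v => [a|] /=; last by have := lk_succ_lt; lia.
by have := ltn_ord a; case: ltnP; lia.
Qed.

Lemma cell_rank_leaf i : cell_rank (cell_leaf i) = (l i + (l k < l' i))%N.
Proof.
rewrite /cell_leaf; case: (eqVneq i k) => [->|hik] /=; first by rewrite l'_k ltnSn addn1.
by rewrite l'_eq.
Qed.

Lemma contract_cell_lower :
  same_cover (contract (path_rel cell_rank) cell_leaf (l k)) (chain_rel N, l).
Proof.
split => [v w|i]; last by rewrite /contract /cell_leaf /=; case: eqP => [->|].
rewrite /contract /chain_rel /path_rel /= -!(inj_eq (@ord_inj N)) /=.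
have := lk_succ_lt; have := ltn_ord v; have := ltn_ord w.
by case: (ltnP (l k) v); case: (ltnP (l k) w) => /= *; apply/idP/idP; lia.
Qed.

Lemma contract_cell_upper :
  same_cover (contract (path_rel cell_rank) cell_leaf (l' k)) (chain_rel N, l').
Proof.
split => [v w|i].
  rewrite /contract /chain_rel /path_rel /= -!(inj_eq (@ord_inj N)) /= l'_k.
  have := lk_succ_lt; have := ltn_ord v; have := ltn_ord w.
  by case: (ltnP (l k) v); case: (ltnP (l k) w) => /= *; apply/idP/idP; lia.
by rewrite /contract /cell_leaf /=; case: (eqVneq i k) => [->|/l'_eq ->].
Qed.

Lemma cell_tree : is_tree (path_rel cell_rank).
Proof. by apply: (path_rel_tree cell_rank_inj cell_rank_lt); rewrite card_option. Qed.

Hypothesis l_adm : admissible_at x l (l k).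
Hypothesis l'_adm : admissible_at x l' (l' k).

Lemma cell_leaf_count u : (\sum_i (cell_leaf i == Some u : nat))%N = free_slots u.
Proof.
case: l_adm => hp _; apply/eqP; rewrite -(eqn_add2r (l k == u)).
rewrite (bigD1 k) //= [X in (_ == X + _)%N]/free_slots.
have := hp u; rewrite /leaf_count (bigD1 k) //= eq_sym => <-.
rewrite /cell_leaf eqxx add0n addnC eqn_add2l; apply/eqP/eq_bigr => i /negbTE hik.
by rewrite hik.
Qed.

Lemma cell_valence v : valence (path_rel cell_rank) cell_leaf v = 3%N.
Proof.
rewrite (valence_path cell_rank_inj cell_rank_lt) card_option card_ord; have hkN := lk_succ_lt.
case: v => [u|] /=.
  rewrite cell_leaf_count -[RHS](free_slots_valence u hN); have := ltn_ord u.
  by case: ltnP; lia.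
have -> : (\sum_i (cell_leaf i == None : nat))%N = 1%N.
  by rewrite (bigD1 k) //= /cell_leaf eqxx big1 // => i /negbTE ->.
by lia.
Qed.

Lemma cell_side_sum_pos r : (0 < r)%N -> (r <= N)%N ->
  0 < \sum_i (if (r <= cell_rank (cell_leaf i))%N then x i else 0).
Proof.
case: l_adm l'_adm => _ hs [_ hs'] r0 rN; have hkN := lk_succ_lt.
under eq_bigr => i _ do rewrite cell_rank_leaf.
case: (ltngtP r (l k).+1) => hr.
- rewrite (eq_bigr (fun i => if (r.-1 < l i)%N then x i else 0)); first by apply: hs; lia.
  move=> i _; congr (if _ then _ else _); case: (eqVneq i k) => [->|/l'_eq ->];
    by rewrite ?l'_k; apply/idP/idP; case: ltnP; lia.
- rewrite (eq_bigr (fun i => if (r - 2 < l i)%N then x i else 0)); first by apply: hs; lia.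
  move=> i _; congr (if _ then _ else _); case: (eqVneq i k) => [->|/l'_eq ->];
    by rewrite ?l'_k; apply/idP/idP; case: ltnP; lia.
rewrite (eq_bigr (fun i => if (l k < l' i)%N then x i else 0)); first by apply: hs'; lia.
move=> i _; congr (if _ then _ else _); case: (eqVneq i k) => [->|/l'_eq ->];
  by rewrite ?l'_k; apply/idP/idP; case: ltnP; lia.
Qed.

Hypothesis x_sum0 : \sum_i x i = 0.

Lemma cell_edge_esum v w : path_rel cell_rank v w ->
  esum (path_rel cell_rank) cell_leaf x v w != 0 /\
  (0 < esum (path_rel cell_rank) cell_leaf x v w -> (cell_rank v < cell_rank w)%N).
Proof.
have hb u : (cell_rank u <= N)%N by have := cell_rank_lt u; rewrite card_option card_ord.
case/orP => /eqP h.
  have hpos : 0 < \sum_i (if (cell_rank w <= cell_rank (cell_leaf i))%N then x i else 0).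
    by apply: cell_side_sum_pos; [rewrite -h | exact: hb].
  rewrite (esum_path_up cell_rank_inj cell_rank_lt _ _ (esym h)).
  by split => [|_]; [exact: lt0r_neq0 | rewrite -h].
have hpos : 0 < \sum_i (if (cell_rank v <= cell_rank (cell_leaf i))%N then x i else 0).
  by apply: cell_side_sum_pos; [rewrite -h | exact: hb].
rewrite (esum_path_down cell_rank_inj cell_rank_lt _ x_sum0 (esym h)) -h in hpos *.
by rewrite oppr_eq0 oppr_gt0 ltNge (ltW hpos) lt0r_neq0.
Qed.

Variables (R : realFieldType) (p : 'I_N -> R).
Hypothesis p_incr : forall i j : 'I_N, (val i < val j)%N -> p i < p j.

Lemma pos_cell_rank_mono : exists t : R, forall v w,
  (cell_rank v < cell_rank w)%N -> pos p t v < pos p t w.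
Proof.
have hp_le (a b : 'I_N) : (a <= b)%N -> p a <= p b.
  by rewrite leq_eqVlt => /orP[/eqP/ord_inj -> //|/p_incr/ltW].
have hlt : p (l k) < p (l' k) by apply: p_incr; rewrite /= l'_k.
have [lk_mid mid_l'k] := midf_lt hlt.
exists ((p (l k) + p (l' k)) / 2) => -[a|] [b|] //= h.
- by apply: p_incr; rewrite /=; move: h; case: ltnP; case: ltnP; lia.
- by apply: le_lt_trans lk_mid; apply: hp_le; move: h; case: ltnP; lia.
- by apply: lt_le_trans mid_l'k _; apply: hp_le; rewrite l'_k; move: h; case: ltnP; lia.
- by rewrite ltnn in h.
Qed.

Lemma cell_ok_path : cell_ok x p (path_rel cell_rank) cell_leaf.
Proof.
split; first exact: cell_tree.
split; first exact: cell_valence.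
split; first by move=> v w /cell_edge_esum[].
have [t ht] := pos_cell_rank_mono; exists t => v w /cell_edge_esum[_ h] /h; exact: ht.
Qed.

Hypothesis n_ge5 : (5 <= n)%N.

Lemma cell_H1_edge : H1_edge x p (chain_rel N, l) (chain_rel N, l').
Proof.
have lk_ne : l k != l' k by apply/eqP => e; move: l'_k; rewrite e; lia.
split; first by apply: admissible_vertex_type_cover => //; exists (l k).
split; first by apply: admissible_vertex_type_cover => //; exists (l' k).
exists (path_rel cell_rank), cell_leaf, (l k), (l' k); split; first exact: cell_ok_path.
split => //; split; first by rewrite /path_rel /= ltnn addn0 eqxx orbT.
split; first by rewrite /path_rel /= l'_k ltnSn addn1 eqxx.
by split; [exact: contract_cell_lower | exact: contract_cell_upper].
Qed.

End Cell.

Lemma same_cover_sym n (C D : Cover n) : same_cover C D -> same_cover D C.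
Proof. by case=> h1 h2; split => *; rewrite ?h1 ?h2. Qed.

Lemma H1_edge_sym (R : realFieldType) n x (p : 'I_(n - 3) -> R) (C D : Cover n) :
  H1_edge x p C D -> H1_edge x p D C.
Proof.
case=> hC [hD [E [L [a [b [hok [hab [ha [hb [hcC hcD]]]]]]]]]].
by split => //; split => //; exists E, L, b, a; rewrite eq_sym.
Qed.

Lemma H1_connected_sym (R : realFieldType) n x (p : 'I_(n - 3) -> R) (C D : Cover n) :
  H1_connected x p C D -> H1_connected x p D C.
Proof.
elim=> [C' D' h|C'|C' D' E' _ IH1 _ IH2]; last by apply: rt_trans IH2 IH1.
  by apply: rt_step; case: h => [/same_cover_sym|/H1_edge_sym]; [left | right].
exact: rt_refl.
Qed.

Lemma leaf_connected_H1 (R : realFieldType) n x (p : 'I_(n - 3) -> R) l1 l2 :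
  (5 <= n)%N -> \sum_i x i = 0 -> (forall i j : 'I_(n - 3), (val i < val j)%N -> p i < p j) ->
  leaf_connected x l1 l2 -> H1_connected x p (chain_rel (n - 3), l1) (chain_rel (n - 3), l2).
Proof.
move=> n_ge5 x_sum0 p_incr.
elim=> [a b [k [h1 h2 h3 h4]]|a|a b _ IH|a b c _ IH1 _ IH2].
- by apply: rt_step; right; exact: (cell_H1_edge h1 h2 h3 h4 x_sum0 p_incr n_ge5).
- exact: rt_refl.
- exact: H1_connected_sym.
- exact: rt_trans IH1 IH2.
Qed.

Theorem lemma3p5 (R : realFieldType) (n : nat) (hn : (5 <= n)%N)
  (x : 'I_n -> int) (hx : Hn x)
  (p : 'I_(n - 3) -> R) (hp : forall i j : 'I_(n - 3), (val i < val j)%N -> p i < p j)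
  (C D : Cover n) (hC : chain_cover x C) (hD : chain_cover x D) :
  H1_connected x p C D.
Proof.
have x_sum0 := hx.1.
have chain_same (E : Cover n) : chain_cover x E -> same_cover E (chain_rel (n - 3), E.2).
  by case=> _ he; split => // v w; rewrite he.
apply: rt_trans (rt_step (or_introl (chain_same _ hC))) _.
apply: rt_trans _ (rt_step (or_introl (same_cover_sym (chain_same _ hD)))).
apply: leaf_connected_H1 => //; apply: admissible_connected => //.
  exact: chain_cover_admissible hC.
exact: chain_cover_admissible hD.
Qed.
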